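(* Let $k\in\mathbb{Z}^+$, let $G:\mathbb{R}\to\mathbb{R}$, and for real weights $\psi_1,\psi_2,\nu,\beta_i,\phi_{i,1},\phi_{i,2},\mu_i$ ($i=1,\dots,k$) let $g(y,e)=\nu+\sum_{i=1}^{k}\beta_iG(\phi_{i,1}y+\phi_{i,2}e+\mu_i)$. Consider the Markov chain $(x_t)$ on $\mathbb{R}^2$ defined by $$x_t=\Psi x_{t-1}+F(x_{t-1})+\Sigma\,\varepsilon_t,$$ where $x_t=(y_t,e_t)'$, $\Sigma=(1,1)'$, $\Psi=\begin{bmatrix}\psi_1&\psi_2\\0&0\end{bmatrix}$, $F(y,e)=(g(y,e),0)'$, and $(\varepsilon_t)$ is an i.i.d. sequence of real random variables. Suppose the distribution of $\varepsilon_t$ is absolutely continuous with respect to Lebesgue measure $\lambda$, with density $\nu(\cdot)$ that is positive everywhere on $\mathbb{R}$ and lower semi-continuous everywhere. Suppose moreover that (a) $G\in C^\infty$ is bounded, nonconstant and asymptotically constant, and (b) $\psi_1+\psi_2\neq 0$. Then the Markov chain $(x_t)$ is irreducible on the state space $(\mathbb{R}^2,\mathcal{B})$, where $\mathcal{B}$ is the Borel $\sigma$-field.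
   Context: This chain is the state-space form of the PARNN$(1,k,1)$ process $y_t=\psi_1y_{t-1}+\psi_2e_{t-1}+g(y_{t-1},e_{t-1})+\varepsilon_t$. A Markov chain on $(\mathcal{X},\mathcal{B})$, $\mathcal{X}\subseteq\mathbb{R}^2$, is called irreducible if $\sum_{t=1}^{\infty}P^t(x,\mathcal{A})>0$ for all $x\in\mathcal{X}$ whenever $\lambda(\mathcal{A})>0$, where $P^t(x,\mathcal{A})$ is the $t$-step transition probability from $x$ to $\mathcal{A}\in\mathcal{B}$ and $\lambda$ is Lebesgue measure. *)

From HB Require Import structures.
From mathcomp Require Import all_boot all_order all_algebra.
From mathcomp Require Import all_classical all_reals all_analysis.
Set Implicit Arguments. Unset Strict Implicit. Unset Printing Implicit Defensive.
Import Order.TTheory GRing.Theory Num.Theory.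
Import numFieldNormedType.Exports.
Local Open Scope classical_set_scope.
Local Open Scope ring_scope.

Definition parnn_g (R : realType) (k : nat) (G : R -> R) (nu0 : R)
  (beta phi1 phi2 mu : 'I_k -> R) (y e : R) : R :=
  nu0 + \sum_(i < k) beta i * G (phi1 i * y + phi2 i * e + mu i).

(* One step of the state-space recursion x_t = Psi x_{t-1} + F(x_{t-1}) + Sigma eps_t,
   with x = (y, e), Psi = [[psi1, psi2], [0, 0]], F(y,e) = (g(y,e), 0)', Sigma = (1,1)'. *)
Definition parnn_step (R : realType) (k : nat) (G : R -> R) (psi1 psi2 nu0 : R)
  (beta phi1 phi2 mu : 'I_k -> R) (x : R * R) (eps : R) : R * R :=
  (psi1 * x.1 + psi2 * x.2 + parnn_g G nu0 beta phi1 phi2 mu x.1 x.2 + eps,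
   0 * x.1 + 0 * x.2 + 0 + eps).

Fixpoint transP (R : realType) (step : R * R -> R -> R * R) (dens : R -> R)
  (t : nat) (x : R * R) (A : set (R * R)) : \bar R :=
  match t with
  | O => (\1_A x)%:E
  | S t' => (\int[@lebesgue_measure R]_(eps in [set: R])
               (transP step dens t' (step x eps) A * (dens eps)%:E))%E
  end.

(* Irreducibility with respect to Lebesgue measure on R^2 (product of Lebesgue measures
   on the product sigma-algebra, which is the Borel sigma-field of R^2). *)
Definition lebesgue_irreducible (R : realType) (step : R * R -> R -> R * R)
  (dens : R -> R) : Prop :=
  forall A : set (R * R), measurable A ->
    ((@lebesgue_measure R \x @lebesgue_measure R) A > 0)%E ->
    forall x : R * R, exists t : nat, (0 < t)%N /\ (transP step dens t x A > 0)%E.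

Definition smooth (R : realType) (G : R -> R) : Prop :=
  forall (n : nat) (x : R), derivable (derive1n n G) x 1.

Definition nonconstant (R : realType) (G : R -> R) : Prop :=
  exists a b : R, G a <> G b.

Definition asymptotically_constant (R : realType) (G : R -> R) : Prop :=
  (exists l : R, G x @[x --> +oo] --> l) /\ (exists l : R, G x @[x --> -oo] --> l).

(* Two steps of the chain starting at x reach (h e1 + e2, e2), where
   h u = psi1 (a + u) + psi2 u + g (a + u, u) for a constant a depending on x.
   Since G is differentiable and bounded, h is differentiable and differs from
   u |-> (psi1 + psi2) u by a bounded amount, so h is onto.  Being Lipschitz at
   every point, h maps Lebesgue-null sets to null sets, hence preimages under
   u |-> h u + e2 of sets of positive measure have positive measure.  By Tonelli,
   P^2(x, A) integrates, against the positive density of e2, the mass that the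
   density of e1 gives to such a preimage of the section of A at e2; a set A of
   positive planar measure has sections of positive measure for a non-null set
   of e2, so P^2(x, A) > 0. *)

From HB Require Import structures.
From mathcomp Require Import all_boot all_order all_algebra.
From mathcomp Require Import all_classical all_reals all_analysis.
From mathcomp Require Import lra ring measurable_realfun.
Import Order.TTheory GRing.Theory Num.Theory.
Import numFieldNormedType.Exports.
Local Open Scope classical_set_scope.
Local Open Scope ring_scope.

Section LipschitzAt.
Context {R : realType}.

Lemma derivable1_continuous {f : R -> R} : (forall x, derivable f x 1) -> continuous f.
Proof. by move=> df x; apply/differentiable_continuous/derivable1_diffP. Qed.

Lemma derivable1_comp {f g : R -> R} {x : R} :
  derivable f x 1 -> derivable g (f x) 1 -> derivable (g \o f) x 1.
Proof. rewrite !derivable1_diffP; exact: differentiable_comp. Qed.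

Definition lipschitz_at (f : R -> R) (x : R) := exists2 M : R, 0 <= M &
  exists2 r : R, 0 < r & forall y, `|y - x| < r -> `|f y - f x| <= M * `|y - x|.

Lemma derivable_lipschitz_at (f : R -> R) x : derivable f x 1 -> lipschitz_at f x.
Proof.
move=> /cvgrPdist_lt /(_ 1 ltr01); set l := lim _.
rewrite /dnbhs /within /= => /nbhs_ballP[r r0 Hr].
exists (`|l| + 1); first by rewrite addr_ge0.
exists r => // y yx.
have [->|yNx] := eqVneq y x; first by rewrite !subrr !normr0 mulr0.
have yx0 : y - x != 0 by rewrite subr_eq0.
have := Hr (y - x); rewrite /ball /= sub0r normrN => /(_ yx yx0).
rewrite /GRing.scale /= mulr1 subrK => quotient_near_l.
have quotient_le : `|(y - x)^-1 * (f y - f x)| <= `|l| + 1.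
  have := ler_normB l (l - (y - x)^-1 * (f y - f x)); rewrite opprB addrC subrK.
  lra.
have -> : f y - f x = (y - x) * ((y - x)^-1 * (f y - f x)) by rewrite mulrA divff // mul1r.
by rewrite normrM mulrC ler_wpM2r.
Qed.

Lemma lipschitz_at_nat {f : R -> R} {x : R} : lipschitz_at f x -> exists n : nat,
  forall y, `|y - x| < n.+1%:R^-1 -> `|f y - f x| <= n%:R * `|y - x|.
Proof.
move=> [M M0 [r r0 Hr]]; set n := (Num.truncn (M + r^-1)).+1.
have n_gt : M + r^-1 < n%:R by exact: truncnS_gt.
have r_gt0 : 0 < r^-1 by rewrite invr_gt0.
exists n => y yx; apply: le_trans (Hr y _) _; last by rewrite ler_wpM2r //; lra.
apply: lt_le_trans yx _; rewrite invf_ple ?posrE ?ltr0n //.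
have : n%:R <= n.+1%:R :> R by rewrite ler_nat.
lra.
Qed.

End LipschitzAt.

Section NullImage.
Context {R : realType}.
Local Notation wl := (@wlength R idfun).

(* Discharges, through [//], the nonnegativity side conditions of the [mu_ext] lemmas. *)
Let wl_ge0 (X : set (ocitv_type R)) : (0 <= wl X)%E.
Proof. exact: wlength_ge0. Qed.

(* On arbitrary, possibly non-measurable, sets [lebesgue_measure] is the outer measure. *)
Let lebesgue_measureE (X : set R) : lebesgue_measure X = mu_ext wl X.
Proof. by []. Qed.

Lemma image_ocitv_cover {h : R -> R} {n : nat} {S : set R} {A : set (ocitv_type R)} :
  (forall x y, S x -> `|y - x| < n.+1%:R^-1 -> `|h y - h x| <= n%:R * `|y - x|) ->
  measurable A -> (wl A < (n.+1%:R^-1)%:E)%E ->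
  exists J : set (ocitv_type R),
    [/\ measurable J, h @` (S `&` A) `<=` J & (wl J <= (2 * n.+1%:R)%:E * wl A)%E].
Proof.
move=> hS /ocitvP[->|[[a b] /= ab ->]] short.
  by exists set0; split=> //; [move=> y [? []] | rewrite wlength0 mule0].
have [[x0 [Sx0 Ax0]]|SAN] := pselect (exists x, S x /\ `]a, b]%classic x); last first.
  exists set0; split=> //; last by rewrite wlength0 mule_ge0 // lee_fin mulr_ge0.
  by move=> y [x SAx _]; apply: SAN; exists x.
have ba : 0 < b - a by rewrite subr_gt0.
move: short; rewrite wlength_itv /= lte_fin ab lte_fin => short.
set c := n.+1%:R * (b - a).
exists `]h x0 - c, h x0 + c]%classic; split.
- exact: is_ocitv.
- move=> _ [y [_ Ay] <-]; move: Ax0 Ay; rewrite /= !in_itv /= => /andP[ax0 x0b] /andP[ay yb].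
  have yx0 : `|y - x0| < b - a by rewrite ltr_norml; apply/andP; split; lra.
  have := hS x0 y Sx0 (lt_trans yx0 short).
  have : n%:R * `|y - x0| < c.
    rewrite /c -[n.+1]addn1 natrD mulrDl mul1r.
    by apply: le_lt_trans (ler_wpM2l _ (ltW yx0)) _; rewrite ?ltrDl.
  rewrite ler_norml; move=> hc /andP[lo hi]; apply/andP; split; lra.
- have c0 : 0 < c by rewrite mulr_gt0 ?ltr0n.
  rewrite !wlength_itv /= !lte_fin ifT; last by rewrite ltrD2l gtrN.
  by rewrite -!EFinD -EFinM lee_fin /c le_eqVlt; apply/orP; left; apply/eqP; ring.
Qed.

Lemma uniformly_lipschitz_null_image (h : R -> R) (n : nat) (S : set R) :
  (forall x y, S x -> `|y - x| < n.+1%:R^-1 -> `|h y - h x| <= n%:R * `|y - x|) ->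
  mu_ext wl S = 0%E -> mu_ext wl (h @` S) = 0%E.
Proof.
move=> hS S0; apply/eqP; rewrite eq_le mu_ext_ge0 // andbT.
apply/lee_addgt0Pr => e e0; rewrite add0e.
have K0 : 0 < 2 * n.+1%:R :> R by rewrite mulr_gt0 ?ltr0n.
set eps := Num.min (e / (2 * n.+1%:R)) n.+1%:R^-1.
have eps0 : 0 < eps by rewrite lt_min divr_gt0 // invr_gt0 ltr0n.
have S_fin : mu_ext wl S \is a fin_num by rewrite S0.
have [_ [A [mA SA] <-]] := lb_ereal_inf_adherent eps0 S_fin.
rewrite -/(mu_ext wl S) S0 add0e => A_lt.
have A_short k : (wl (A k) < (n.+1%:R^-1)%:E)%E.
  apply: le_lt_trans (lt_le_trans A_lt _); last by rewrite lee_fin ge_min lexx orbT.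
  apply: le_trans (nneseries_lim_ge k.+1 _) => //.
  by rewrite big_nat_recr //= leeDr // sume_ge0.
have [J HJ] := choice (fun k => image_ocitv_cover hS (mA k) (A_short k)).
apply: (@le_trans _ _ (\sum_(k <oo) wl (J k))%E).
  apply: ereal_inf_lbound; exists J => //; split=> [k|_ [x Sx <-]]; first by case: (HJ k).
  have [k _ Akx] := SA x Sx; exists k => //; case: (HJ k) => _ + _; apply.
  by exists x.
apply: (@le_trans _ _ (\sum_(k <oo) (2 * n.+1%:R)%:E * wl (A k))%E).
  by apply: lee_nneseries => // k _; case: (HJ k).
rewrite nneseriesZl //.
apply: (@le_trans _ _ ((2 * n.+1%:R)%:E * eps%:E)%E).
  by rewrite lee_pmul2l ?lte_fin // ltW.
by rewrite -EFinM lee_fin -ler_pdivlMl // mulrC ge_min lexx.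
Qed.

Lemma lipschitz_at_null_image {h : R -> R} {N : set R} :
  (forall x, lipschitz_at h x) ->
  lebesgue_measure N = 0%E -> lebesgue_measure (h @` N) = 0%E.
Proof.
move=> hL N0; pose S n := [set x | N x /\
  forall y, `|y - x| < n.+1%:R^-1 -> `|h y - h x| <= n%:R * `|y - x|].
have S0 n : mu_ext wl (h @` S n) = 0%E.
  apply: (@uniformly_lipschitz_null_image _ n) => [x y [_ ]|]; first exact.
  by apply/eqP; rewrite eq_le mu_ext_ge0 // andbT -N0 le_mu_ext // => x [].
have hN_sub : h @` N `<=` \bigcup_n (h @` S n).
  by move=> _ [x Nx <-]; have [n hn] := lipschitz_at_nat (hL x); exists n => //; exists x.
apply/eqP; rewrite eq_le measure_ge0 andbT.
apply: (@le_trans _ _ (mu_ext wl (\bigcup_n (h @` S n)))); first exact: le_mu_ext.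
apply: le_trans (mu_ext_sigma_subadditive _ _) _ => //.
by rewrite eseries0.
Qed.

Lemma lipschitz_at_preimage_gt0 (h : R -> R) (B : set R) :
  (forall x, lipschitz_at h x) -> (forall w, exists u, h u = w) ->
  (0 < lebesgue_measure B)%E -> (0 < lebesgue_measure (h @^-1` B))%E.
Proof.
move=> hL hsurj; rewrite !lt0e !measure_ge0 !andbT; apply: contra => /eqP preB0.
rewrite eq_le measure_ge0 andbT -(lipschitz_at_null_image hL preB0) !lebesgue_measureE.
apply: le_mu_ext => w Bw.
by have [u huw] := hsurj w; exists u; rewrite /preimage /= huw.
Qed.
End NullImage.

Section NearLinear.
Context {R : realType}.

Lemma continuous_near_linear_surj {q : R -> R} {s M : R} : continuous q -> s != 0 ->
  (forall u, `|q u - s * u| <= M) -> forall w, exists u, q u = w.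
Proof.
move=> qc s0 qM w.
have [u1 w_lt] : exists u, w < q u.
  exists ((w + M + 1) / s); have := qM ((w + M + 1) / s).
  rewrite [s * _]mulrC divfK // ler_norml; lra.
have [u2 lt_w] : exists u, q u < w.
  exists ((w - M - 1) / s); have := qM ((w - M - 1) / s).
  rewrite [s * _]mulrC divfK // ler_norml; lra.
have between a b : a <= b -> Num.min (q a) (q b) <= w <= Num.max (q a) (q b) ->
    exists u, q u = w.
  by move=> ab /(IVT ab (continuous_subspaceT qc))[u _ <-]; exists u.
have w_between : Num.min (q u1) (q u2) <= w <= Num.max (q u1) (q u2).
  by rewrite ge_min le_max (ltW w_lt) (ltW lt_w) !orbT.
have [/between|/ltW/between] := leP u1 u2; first exact.
by rewrite minC maxC; apply.
Qed.
End NearLinear.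

Section PositiveIntegral.
Context d (T : measurableType d) (R : realType) (mu : {measure set T -> \bar R}).
Local Open Scope ereal_scope.

Lemma ge0_integral_gt0 (f g : T -> \bar R) :
  measurable_fun [set: T] f -> measurable_fun [set: T] g ->
  (forall x, 0 <= f x) -> (forall x, 0 <= g x) ->
  (forall x, 0 < f x -> 0 < g x) ->
  0 < \int[mu]_x f x -> 0 < \int[mu]_x g x.
Proof.
move=> mf mg f0 g0 fg; rewrite !lt0e !integral_ge0 // !andbT; apply: contra.
move=> /eqP ig0; have : \int[mu]_x `|g x| = 0.
  by rewrite -ig0; apply: eq_integral => x _; rewrite gee0_abs.
move=> /(ae_eq_integral_abs mu measurableT mg) g_ae0.
rewrite (@ae_eq_integral _ _ _ mu setT (cst 0)) ?integral0 //.
apply: filterS g_ae0 => x gx0 Tx; apply/eqP.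
rewrite eq_le f0 andbT leNgt; apply/negP => /fg.
by rewrite gx0 // ltxx.
Qed.
End PositiveIntegral.

Section TwoStep.
Context {R : realType} {dens h : R -> R}.
Hypotheses (mdens : measurable_fun setT dens) (dens_gt0 : forall e, 0 < dens e).
Hypotheses (hder : forall u, derivable h u 1) (hsurj : forall w, exists u, h u = w).
Local Notation leb := (@lebesgue_measure R).

Let shear_density (A : set (R * R)) (p : R * R) : \bar R :=
  (\1_A (h p.1 + p.2, p.2) * dens p.2)%:E.

Let shear_integrand (A : set (R * R)) (p : R * R) : \bar R :=
  (shear_density A p * (dens p.1)%:E)%E.

Let shear_density_ge0 (A : set (R * R)) (p : R * R) : (0 <= shear_density A p)%E.
Proof. by rewrite lee_fin mulr_ge0 // ltW. Qed.

Let shear_integrand_ge0 (A : set (R * R)) (p : R * R) : (0 <= shear_integrand A p)%E.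
Proof. by rewrite mule_ge0 // lee_fin ltW. Qed.

Let measurable_shear_density (A : set (R * R)) :
  measurable A -> measurable_fun setT (shear_density A).
Proof.
move=> mA; have hc := derivable1_continuous hder.
apply/measurable_EFinP/measurable_funM.
  apply: measurableT_comp; first exact: measurable_indic.
  apply: measurable_fun_pair; last exact: measurable_snd.
  apply: measurable_funD; last exact: measurable_snd.
  by apply: measurableT_comp; [exact: continuous_measurable_fun | exact: measurable_fst].
by apply: measurableT_comp; [exact: mdens | exact: measurable_snd].
Qed.

Let measurable_shear_integrand (A : set (R * R)) :
  measurable A -> measurable_fun setT (shear_integrand A).
Proof.
move=> mA; apply: emeasurable_funM; first exact: measurable_shear_density.
by apply/measurable_EFinP; apply: measurableT_comp; [exact: mdens | exact: measurable_fst].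
Qed.

Let shear_section_integral_gt0 (A : set (R * R)) (e2 : R) : measurable A ->
  (0 < leb (ysection A e2))%E -> (0 < \int[leb]_e1 shear_integrand A (e1, e2))%E.
Proof.
move=> mA A_e2_gt0; pose B := (fun e1 => h e1 + e2) @^-1` ysection A e2.
have mB : measurable B.
  rewrite -[B]setTI.
  apply: (continuous_measurable_fun _) => //; last exact: measurable_ysection.
  by apply: derivable1_continuous => u; apply: derivableD.
apply: (@ge0_integral_gt0 _ _ _ leb (fun e1 => (\1_B e1)%:E)).
- exact/measurable_EFinP/measurable_indic.
- exact: measurable_fun_pair1 (measurable_shear_integrand A mA).
- by move=> e1; rewrite lee_fin.
- by move=> e1; exact: shear_integrand_ge0.
- move=> e1; rewrite lte_fin indicE.
  have [/set_mem Be1 _|] := boolP (e1 \in B); last by rewrite ltxx.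
  rewrite /shear_integrand /shear_density indicE mem_set //.
    by apply: mule_gt0; rewrite lte_fin // mul1r.
  exact: set_mem Be1.
rewrite integral_indic // setIT.
apply: lipschitz_at_preimage_gt0 => // [u|w].
  by apply: derivable_lipschitz_at; apply: derivableD.
by have [u hu] := hsurj (w - e2); exists u; rewrite hu subrK.
Qed.

Let shear_integral_gt0 (A : set (R * R)) : measurable A -> (0 < (leb \x leb) A)%E ->
  (0 < \int[leb]_e1 \int[leb]_e2 shear_integrand A (e1, e2))%E.
Proof.
move=> mA A_gt0; have mF := measurable_shear_integrand A mA.
rewrite (@fubini_tonelli _ _ _ _ _ leb leb _ mF (shear_integrand_ge0 A)).
have A_ysection : ((leb \x leb) A = \int[leb]_e2 leb (ysection A e2))%E.
  pose T := measurableTypeR R.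
  rewrite /product_measure1 -(@indic_fubini_tonelli_FE _ _ T T R leb A mA).
  rewrite (@indic_fubini_tonelli _ _ T T R leb leb A mA).
  by rewrite (@indic_fubini_tonelli_GE _ _ T T R leb A mA).
move: A_gt0; rewrite A_ysection; apply: ge0_integral_gt0.
- exact: measurable_fun_ysection.
- exact: (@measurable_fun_fubini_tonelli_G _ _ _ _ _ leb _ mF (shear_integrand_ge0 A)).
- by move=> e2; exact: measure_ge0.
- by move=> e2; apply: integral_ge0 => e1 _; exact: shear_integrand_ge0.
by move=> e2; exact: shear_section_integral_gt0.
Qed.

Lemma transP2_gt0 (step : R * R -> R -> R * R) (x : R * R) (A : set (R * R)) :
  (forall e1 e2, step (step x e1) e2 = (h e1 + e2, e2)) ->
  measurable A -> (0 < (leb \x leb) A)%E -> (0 < transP step dens 2 x A)%E.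
Proof.
move=> stepE mA A_gt0.
suff -> : transP step dens 2 x A = (\int[leb]_e1 \int[leb]_e2 shear_integrand A (e1, e2))%E.
  exact: shear_integral_gt0.
apply: eq_integral => e1 _.
(* The integrals of [transP] range over [measurableTypeR R], which has the same
   measurable sets as [R] but another display; the annotation makes them match. *)
rewrite (eq_integral (fun e2 : measurableTypeR R => shear_density A (e1, e2))); last first.
  by move=> e2 _; rewrite stepE.
rewrite -ge0_integralZr //; last by rewrite lee_fin ltW.
exact: measurable_fun_pair2 (measurable_shear_density A mA).
Qed.
End TwoStep.

Section Parnn.
Context {R : realType} {k : nat} {G : R -> R} (nu0 : R) (beta phi1 phi2 mu : 'I_k -> R).
Local Notation g := (parnn_g G nu0 beta phi1 phi2 mu).

Lemma parnn_g_bounded : bounded_fun G -> exists M, forall y e, `|g y e| <= M.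
Proof.
move=> [M [_ GM]]; exists (`|nu0| + \sum_(i < k) `|beta i| * (M + 1)) => y e.
apply: le_trans (ler_normD _ _) _; rewrite lerD2l.
apply: le_trans (ler_norm_sum _ _ _) _; apply: ler_sum => i _.
by rewrite normrM ler_wpM2l //; apply: (GM (M + 1)); rewrite ?ltrDl.
Qed.

Lemma derivable_parnn_g_diagonal (a t : R) : (forall z, derivable G z 1) ->
  derivable (fun s => g (a + s) s) t 1.
Proof.
move=> Gder; apply: derivableD; first exact: derivable_cst.
rewrite -fct_sumE; apply: derivable_sum => i.
apply: derivableM; first exact: derivable_cst.
apply: (derivable1_comp (f := fun s => phi1 i * (a + s) + phi2 i * s + mu i)) => //.
Qed.
End Parnn.

Theorem theorem1 (R : realType) (k : nat) (hk : (0 < k)%N) (G : R -> R)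
  (psi1 psi2 nu0 : R) (beta phi1 phi2 mu : 'I_k -> R) (dens : R -> R)
  (dens_meas : measurable_fun [set: R] dens)
  (dens_int : (\int[@lebesgue_measure R]_(x in [set: R]) (dens x)%:E = 1)%E)
  (dens_pos : forall x, 0 < dens x)
  (dens_lsc : lower_semicontinuous (fun x : R => (dens x)%:E))
  (G_smooth : smooth G) (G_bounded : bounded_fun G) (G_noncst : nonconstant G)
  (G_asym : asymptotically_constant G)
  (hpsi : psi1 + psi2 != 0) :
  lebesgue_irreducible (parnn_step G psi1 psi2 nu0 beta phi1 phi2 mu) dens.
Proof.
move=> A mA A_gt0 x; exists 2%N; split => //.
set g := parnn_g G nu0 beta phi1 phi2 mu.
set a := psi1 * x.1 + psi2 * x.2 + g x.1 x.2.
pose h u := psi1 * (a + u) + psi2 * u + g (a + u) u.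
have h_der u : derivable h u 1.
  apply: derivableD; last by apply: derivable_parnn_g_diagonal; exact: G_smooth 0%N.
  by apply: derivableD; apply: derivableM.
have [M gM] := parnn_g_bounded nu0 beta phi1 phi2 mu G_bounded.
apply: (transP2_gt0 dens_meas dens_pos h_der) => //.
  apply: (continuous_near_linear_surj (M := `|psi1 * a| + M)
           (derivable1_continuous h_der) hpsi) => u.
  have -> : h u - (psi1 + psi2) * u = psi1 * a + g (a + u) u by rewrite /h; ring.
  by apply: le_trans (ler_normD _ _) _; rewrite lerD2l; exact: gM.
by move=> e1 e2; rewrite /parnn_step /= !mul0r !add0r.
Qed.
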